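(* In $\mathcal F_8$, the hyperelliptic divisor $H_h$ and the unigonal divisor $H_u$ have nonempty intersection, and $H_u$ has no self-intersection in the sense of Looijenga, i.e. $H_u^{(2)}=\emptyset$.
   Context: $\Lambda_8=U^2\oplus E_8\oplus E_7\oplus A_1$ (negative definite root lattices), signature $(2,18)$; $\mathcal D_{\Lambda_8}=\{[z]\in\mathbb P(\Lambda_8\otimes\mathbb C):z^2=0,z\bar z>0\}$, $\mathcal D_v=\{[z]\in\mathcal D_{\Lambda_8}:z\cdot v=0\}$, $\Gamma=O(\Lambda_8)$, $\mathcal F_8=\Gamma\backslash\mathcal D_{\Lambda_8}$. For primitive $v\in\Lambda_8$, $\operatorname{div}(v)$ is the positive generator of $\langle v,\Lambda_8\rangle$; $v$ is unigonal if $v^2=-2,\operatorname{div}(v)=2$, hyperelliptic if $v^2=-6,\operatorname{div}(v)=2$. $H_u$ (resp. $H_h$) is the image in $\mathcal F_8$ of $\bigcup\mathcal D_v$ over unigonal (resp. hyperelliptic) $v$. For $m\ge1$, the Looijenga self-intersection $H_u^{(m)}$ is the image in $\mathcal F_8$ of $\bigcup\mathcal D_{v_1}\cap\cdots\cap\mathcal D_{v_m}$ over all $m$-tuples of linearly independent vectors $v_1,\dots,v_m$ in the $\Gamma$-orbit of a unigonal vector. *)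

(* lattices as integer row vectors, complex numbers as
   R[i] (mathcomp-real-closed) over an arbitrary R : realType. *)
From HB Require Import structures.
From mathcomp Require Import all_boot all_order all_algebra.
From mathcomp Require Import complex.
From mathcomp Require Import reals.
Set Implicit Arguments. Unset Strict Implicit. Unset Printing Implicit Defensive.
Import Order.TTheory GRing.Theory Num.Theory.
Local Open Scope ring_scope.

Definition graph_mx (n : nat) (d : int) (edges : seq (nat * nat)) : 'M[int]_n :=
  \matrix_(i < n, j < n)
    if i == j then d
    else if ((nat_of_ord i, nat_of_ord j) \in edges)
            || ((nat_of_ord j, nat_of_ord i) \in edges) then 1 else 0.

Definition U_mx : 'M[int]_2 := graph_mx 2 0 [:: (0, 1)]%N.

(* negative definite root lattices = minus the Cartan matrices
   (Bourbaki numbering 1..n shifted to 0..n-1):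
   E8: 1-3,3-4,4-5,5-6,6-7,7-8,2-4 ; E7: 1-3,3-4,4-5,5-6,6-7,2-4 ; A1 *)
Definition E8_mx : 'M[int]_8 :=
  graph_mx 8 (-2) [:: (0,2); (2,3); (3,4); (4,5); (5,6); (6,7); (1,3)]%N.
Definition E7_mx : 'M[int]_7 :=
  graph_mx 7 (-2) [:: (0,2); (2,3); (3,4); (4,5); (5,6); (1,3)]%N.
Definition A1_mx : 'M[int]_1 := graph_mx 1 (-2) [::].

Definition dsum m n (A : 'M[int]_m) (B : 'M[int]_n) : 'M[int]_(m + n) :=
  block_mx A 0 0 B.

Definition Gram8 : 'M[int]_20 :=
  dsum U_mx (dsum U_mx (dsum E8_mx (dsum E7_mx A1_mx))).

Definition bil (v w : 'rV[int]_20) : int := (v *m Gram8 *m w^T) 0 0.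

Definition primitive (v : 'rV[int]_20) : Prop :=
  v != 0 /\ forall (k : int) (w : 'rV[int]_20), v = k *: w -> k = 1 \/ k = -1.

(* d is the positive generator of the ideal <v, Lambda_8> = { bil v w } *)
Definition is_div (v : 'rV[int]_20) (d : int) : Prop :=
  0 < d /\ (forall w, (d %| bil v w)%Z) /\ (exists w, bil v w = d).

Definition unigonal (v : 'rV[int]_20) : Prop :=
  primitive v /\ bil v v = -2 /\ is_div v 2.

Definition hyperelliptic (v : 'rV[int]_20) : Prop :=
  primitive v /\ bil v v = -6 /\ is_div v 2.

(* Gamma = O(Lambda_8): integral invertible matrices preserving the form,
   acting on row vectors by v |-> v *m g *)
Definition in_Gamma (g : 'M[int]_20) : Prop :=
  g \in unitmx /\ g *m Gram8 *m g^T = Gram8.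

Definition in_unigonal_orbit (v : 'rV[int]_20) : Prop :=
  exists (u : 'rV[int]_20) (g : 'M[int]_20), unigonal u /\ in_Gamma g /\ v = u *m g.

Definition lin_indep2 (v1 v2 : 'rV[int]_20) : Prop :=
  forall a b : int, a *: v1 + b *: v2 = 0 -> a = 0 /\ b = 0.

Section Period.
Variable R : realType.
Local Notation C := (R[i]).

Definition intC (x : int) : C := x%:~R.
Definition toC (v : 'rV[int]_20) : 'rV[C]_20 := map_mx intC v.
Definition bilC (z w : 'rV[C]_20) : C := (z *m map_mx intC Gram8 *m w^T) 0 0.

(* [z] in D_{Lambda_8}: z^2 = 0 and z . zbar > 0 (these conditions are
   homogeneous, so they are conditions on the projective point [z]) *)
Definition in_D (z : 'rV[C]_20) : Prop :=
  bilC z z = 0 /\ 0 < bilC z (map_mx conjc z).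

Definition in_Dv (v : 'rV[int]_20) (z : 'rV[C]_20) : Prop :=
  in_D z /\ bilC z (toC v) = 0.

(* [z] and [z'] have the same image in F_8 = Gamma \ D *)
Definition sameF (z z' : 'rV[C]_20) : Prop :=
  exists g : 'M[int]_20, in_Gamma g /\
    exists c : C, c != 0 /\ z' = c *: (z *m map_mx intC g).

(* [z] lies in the union of the D_v, v unigonal / hyperelliptic; the image
   of such [z] in F_8 is exactly H_u / H_h *)
Definition in_union_unigonal (z : 'rV[C]_20) : Prop :=
  exists v, unigonal v /\ in_Dv v z.
Definition in_union_hyperelliptic (z : 'rV[C]_20) : Prop :=
  exists v, hyperelliptic v /\ in_Dv v z.

Definition in_union_Hu2 (z : 'rV[C]_20) : Prop :=
  exists v1 v2, in_unigonal_orbit v1 /\ in_unigonal_orbit v2 /\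
    lin_indep2 v1 v2 /\ in_Dv v1 z /\ in_Dv v2 z.

End Period.

From HB Require Import structures.
From mathcomp Require Import all_boot all_order all_algebra.
From mathcomp Require Import complex reals.
From mathcomp Require Import zify ring lra.
Set Implicit Arguments. Unset Strict Implicit. Unset Printing Implicit Defensive.
Import Order.TTheory GRing.Theory Num.Theory.
Local Open Scope ring_scope.

(* H_h and H_u meet at the period spanned by the positive vectors x = e1 + f1
   and y = e2 + f2 of the two hyperbolic planes: it is orthogonal both to the
   hyperelliptic vector 2 w7 of E7 and to the A1 root.

   If [z] lies on D_v1 and D_v2 for v1, v2 in
   the orbit of a unigonal vector, then v1 and v2 lie in the orthogonal
   complement of the positive plane <Re z, Im z>, which is negative definite
   because Lambda_8 has signature (2, 18). Since v1 . v2 is even and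
   v1^2 = v2^2 = -2, this forces v1 . v2 = 0. But every v with v^2 = -2 and
   v . Lambda_8 in 2Z is congruent modulo 2 Lambda_8 to the A1 root (a
   computation in the discriminant group of E7 + A1), so v1 - v2 lies in
   2 Lambda_8 and its norm -4 would be divisible by 8. *)

Section CoordinateForm.
Variable R : comNzRingType.
Implicit Types (a : R) (x y u v w : 'rV[R]_20).

Definition coord x (k : nat) : R := x 0 (inord k).
Arguments coord : simpl never.

Lemma row20P x y : (forall k, (k < 20)%N -> coord x k = coord y k) -> x = y.
Proof. by move=> eq_xy; apply/rowP => i; rewrite -(inord_val i); apply: eq_xy. Qed.

Lemma coordD x y k : coord (x + y) k = coord x k + coord y k.
Proof. by rewrite /coord mxE. Qed.

Lemma coordZ a x k : coord (a *: x) k = a * coord x k.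
Proof. by rewrite /coord mxE. Qed.

Definition unit_vec (j : nat) : 'rV[R]_20 :=
  \row_(i < 20) if (i : nat) == j then 1 else 0.

Lemma coord_unit_vec j : (j < 20)%N -> coord (unit_vec j) j = 1.
Proof. by move=> lt_j20; rewrite /coord mxE inordK // eqxx. Qed.

Lemma coord_unit_vec_neq j k :
  (k < 20)%N -> k != j -> coord (unit_vec j) k = 0.
Proof. by move=> lt_k20 /negbTE neq_kj; rewrite /coord mxE inordK // neq_kj. Qed.

(* Gram8 = H + H^T, where H, the matrix of [half_form], is the strict upper
   triangle of Gram8 plus half its diagonal; hence [form x x] is even. *)
Definition half_form x y : R :=
  coord x 0 * coord y 1 + coord x 2 * coord y 3
  + coord x 4 * coord y 6 + coord x 6 * coord y 7 + coord x 7 * coord y 8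
  + coord x 8 * coord y 9 + coord x 9 * coord y 10 + coord x 10 * coord y 11
  + coord x 5 * coord y 7
  + coord x 12 * coord y 14 + coord x 14 * coord y 15 + coord x 15 * coord y 16
  + coord x 16 * coord y 17 + coord x 17 * coord y 18 + coord x 13 * coord y 15
  - (coord x 4 * coord y 4 + coord x 5 * coord y 5 + coord x 6 * coord y 6
     + coord x 7 * coord y 7 + coord x 8 * coord y 8 + coord x 9 * coord y 9
     + coord x 10 * coord y 10 + coord x 11 * coord y 11
     + coord x 12 * coord y 12 + coord x 13 * coord y 13
     + coord x 14 * coord y 14 + coord x 15 * coord y 15
     + coord x 16 * coord y 16 + coord x 17 * coord y 17
     + coord x 18 * coord y 18 + coord x 19 * coord y 19).

Definition form x y : R := half_form x y + half_form y x.

Lemma formC x y : form x y = form y x.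
Proof. by rewrite /form addrC. Qed.

Lemma form_diag x : form x x = 2 * half_form x x.
Proof. by rewrite /form mulr_natl mulr2n. Qed.

Lemma formDl u v w : form (u + v) w = form u w + form v w.
Proof. rewrite /form /half_form !coordD; ring. Qed.

Lemma formZl a v w : form (a *: v) w = a * form v w.
Proof. rewrite /form /half_form !coordZ; ring. Qed.

Lemma formDr u v w : form u (v + w) = form u v + form u w.
Proof. by rewrite formC formDl !(formC u). Qed.

Lemma formZr a v w : form v (a *: w) = a * form v w.
Proof. by rewrite formC formZl formC. Qed.

Lemma formNl v w : form (- v) w = - form v w.
Proof. by rewrite -scaleN1r formZl mulN1r. Qed.

Lemma formNr v w : form v (- w) = - form v w.
Proof. by rewrite formC formNl formC. Qed.

End CoordinateForm.

(* The entries of Gram8 as a function on [nat], evaluable by [simpl]. *)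
Definition gram_entry_block (m : nat) (f g : nat -> nat -> int) (i j : nat) : int :=
  if (i < m)%N then (if (j < m)%N then f i j else 0) else
  if (j < m)%N then 0 else g (i - m)%N (j - m)%N.

Definition gram_entry_graph (d : int) (e : seq (nat * nat)) (i j : nat) : int :=
  if i == j then d else if ((i, j) \in e) || ((j, i) \in e) then 1 else 0.

Definition gram8_entry : nat -> nat -> int :=
  gram_entry_block 2 (gram_entry_graph 0 [:: (0, 1)]%N)
  (gram_entry_block 2 (gram_entry_graph 0 [:: (0, 1)]%N)
  (gram_entry_block 8
     (gram_entry_graph (-2) [:: (0,2); (2,3); (3,4); (4,5); (5,6); (6,7); (1,3)]%N)
  (gram_entry_block 7
     (gram_entry_graph (-2) [:: (0,2); (2,3); (3,4); (4,5); (5,6); (1,3)]%N)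
     (gram_entry_graph (-2) [::])))).

Lemma dsum_entry m n (A : 'M[int]_m) (B : 'M[int]_n) (f g : nat -> nat -> int) :
  (forall i j : 'I_m, A i j = f i j) -> (forall i j : 'I_n, B i j = g i j) ->
  forall i j : 'I_(m + n), dsum A B i j = gram_entry_block m f g i j.
Proof.
move=> eqA eqB i j; rewrite /dsum /gram_entry_block.
case: (split_ordP i) => i' ->; case: (split_ordP j) => j' ->.
- by rewrite block_mxEul /=.
- by rewrite block_mxEur /= mxE.
- by rewrite block_mxEdl /= mxE.
- by rewrite block_mxEdr eqB /= !addKn.
Qed.

Lemma Gram8_entry (i j : 'I_20) : Gram8 i j = gram8_entry i j.
Proof.
have graph_entry n d e (k l : 'I_n) : graph_mx n d e k l = gram_entry_graph d e k l.
  by rewrite mxE.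
rewrite /Gram8.
do 4 (apply: dsum_entry => [k l|]; first exact: graph_entry).
exact: graph_entry.
Qed.

Lemma form_mxE (R : comNzRingType) (x y : 'rV[R]_20) :
  (x *m map_mx intr Gram8 *m y^T) 0 0 = form x y.
Proof.
have sum20 (F : 'I_20 -> R) : \sum_(i < 20) F i = \sum_(0 <= k < 20) F (inord k).
  by rewrite big_mkord; apply: eq_bigr => i _; rewrite inord_val.
have -> : (x *m map_mx intr Gram8 *m y^T) 0 0 =
    \sum_(0 <= j < 20) \sum_(0 <= k < 20)
      coord x k * (gram8_entry k j)%:~R * coord y j.
  rewrite mxE sum20; apply: eq_big_nat => j /andP[_ lt_j].
  rewrite [(x *m _) _ _]mxE sum20 big_distrl /=; apply: eq_big_nat => k /andP[_ lt_k].
  by rewrite [map_mx _ _ _ _]mxE Gram8_entry !inordK // [y^T _ _]mxE.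
rewrite unlock /= /gram8_entry /gram_entry_block /gram_entry_graph /=.
rewrite /form /half_form; ring.
Qed.

Lemma coord_map (R S : comNzRingType) (f : R -> S) (x : 'rV[R]_20) k :
  coord (map_mx f x) k = f (coord x k).
Proof. by rewrite /coord mxE. Qed.

Lemma form_map (R S : comNzRingType) (f : {rmorphism R -> S}) (x y : 'rV[R]_20) :
  form (map_mx f x) (map_mx f y) = f (form x y).
Proof.
by rewrite /form /half_form !coord_map !(rmorphD, rmorphN, rmorphM).
Qed.

Definition pos_x {R : comNzRingType} : 'rV[R]_20 := unit_vec R 0 + unit_vec R 1.
Definition pos_y {R : comNzRingType} : 'rV[R]_20 := unit_vec R 2 + unit_vec R 3.

Lemma form_pos_x (R : comNzRingType) (u : 'rV[R]_20) :
  form u pos_x = coord u 0 + coord u 1.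
Proof.
rewrite /form /half_form /pos_x !coordD !coord_unit_vec // !coord_unit_vec_neq //.
ring.
Qed.

Lemma form_pos_y (R : comNzRingType) (u : 'rV[R]_20) :
  form u pos_y = coord u 2 + coord u 3.
Proof.
rewrite /form /half_form /pos_y !coordD !coord_unit_vec // !coord_unit_vec_neq //.
ring.
Qed.

Lemma sum_wsqr_ge0 (R : realFieldType) (c l : seq R) :
  all (fun a => 0 < a) c -> size c = size l ->
  0 <= \sum_(i < size l) c`_i * l`_i ^+ 2
  /\ (\sum_(i < size l) c`_i * l`_i ^+ 2 = 0 -> l = nseq (size l) 0).
Proof.
move=> /(all_nthP 0) c_gt0 size_cl.
have term_ge0 (i : 'I_(size l)) : 0 <= c`_i * l`_i ^+ 2.
  by rewrite mulr_ge0 ?sqr_ge0 // ltW // c_gt0 // size_cl.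
split=> [|/psumr_eq0P term0]; first exact: sumr_ge0.
have {}term0 := term0 (fun i _ => term_ge0 i).
apply: (@eq_from_nth _ 0) => [|i lt_il]; first by rewrite size_nseq.
have /eqP := term0 (Ordinal lt_il) isT.
by rewrite nth_nseq lt_il mulf_eq0 gt_eqF ?c_gt0 ?size_cl //= sqrf_eq0 => /eqP.
Qed.

(* The weights [c] and linear forms [l] come from an LDL^T decomposition of
   minus the Gram matrix on the orthogonal complement of [pos_x], [pos_y]. *)
Lemma form_perp_pos_plane_neg_def (R : realFieldType) (u : 'rV[R]_20) :
  form u pos_x = 0 -> form u pos_y = 0 -> form u u <= 0 /\ (form u u = 0 -> u = 0).
Proof.
rewrite form_pos_x form_pos_y => u01 u23.
pose c : seq R := [:: 120; 120; 30; 30; 10; 2; 3; 5; 10; 30; 30; 30; 10; 2; 3; 5; 40; 120].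
pose l := [:: coord u 0; coord u 2;
  2 * coord u 4 - coord u 6; 2 * coord u 5 - coord u 7; 3 * coord u 6 - 2 * coord u 7;
  5 * coord u 7 - 6 * coord u 8; 4 * coord u 8 - 5 * coord u 9;
  3 * coord u 9 - 4 * coord u 10; 2 * coord u 10 - 3 * coord u 11; coord u 11;
  2 * coord u 12 - coord u 14; 2 * coord u 13 - coord u 15; 3 * coord u 14 - 2 * coord u 15;
  5 * coord u 15 - 6 * coord u 16; 4 * coord u 16 - 5 * coord u 17;
  3 * coord u 17 - 4 * coord u 18; coord u 18; coord u 19].
have sos : 60 * form u u = - \sum_(i < size l) c`_i * l`_i ^+ 2.
  rewrite /= !big_ord_recr big_ord0 /= /form /half_form.
  have -> : coord u 1 = - coord u 0 by lra.
  have -> : coord u 3 = - coord u 2 by lra.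
  ring.
have c_gt0 : all (fun a => 0 < a) c by rewrite /= !ltr0n.
have [sum_ge0 sum0] := sum_wsqr_ge0 c_gt0 (erefl : size c = size l).
split=> [|uu0]; first lra.
have [l0 l2 l4 l5 l6 l7 l8 l9 l10 l11 l12 l13 l14 l15 l16 l17 l18 l19] :
    l = nseq (size l) 0 by apply: sum0; lra.
clear -u01 u23 l0 l2 l4 l5 l6 l7 l8 l9 l10 l11 l12 l13 l14 l15 l16 l17 l18 l19.
apply: row20P => k lt_k20; rewrite [RHS]/coord mxE.
by do 20 (case: k lt_k20 => [|k] lt_k20; first lra).
Qed.

Section PositivePlane.
Variables (R : realFieldType) (V : lmodType R) (b : V -> V -> R).
Hypotheses (bC : forall u v, b u v = b v u)
  (bDl : forall u v w, b (u + v) w = b u w + b v w)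
  (bZl : forall a u v, b (a *: u) v = a * b u v).
Variables p q : V.
Hypothesis perp_neg_def :
  forall u, b u p = 0 -> b u q = 0 -> b u u <= 0 /\ (b u u = 0 -> u = 0).
Variables (x y : V) (t : R).
Hypotheses (t_gt0 : 0 < t) (bxx : b x x = t) (byy : b y y = t) (bxy : b x y = 0).

Let bDr u v w : b u (v + w) = b u v + b u w.
Proof. by rewrite bC bDl !(bC u). Qed.

Let bZr a u v : b u (a *: v) = a * b u v.
Proof. by rewrite bC bZl bC. Qed.

Let b_lin2 a c u v w : b (a *: u + c *: v) w = a * b u w + c * b v w.
Proof. by rewrite bDl !bZl. Qed.

Let norm_plane_perp d a c w : b w x = 0 -> b w y = 0 ->
  b (d *: w + (a *: x + c *: y)) (d *: w + (a *: x + c *: y))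
  = d ^+ 2 * b w w + (a ^+ 2 + c ^+ 2) * t.
Proof.
move=> wx wy.
rewrite !(bDl, bZl, bDr, bZr) (bC x w) (bC y w) (bC y x) wx wy bxy bxx byy; ring.
Qed.

Let sqr_sum_le0 a c : (a ^+ 2 + c ^+ 2) * t <= 0 -> a = 0 /\ c = 0.
Proof.
rewrite pmulr_lle0 // => sum_le0; move: (sqr_ge0 a) (sqr_ge0 c) => a2_ge0 c2_ge0.
by split; apply/eqP; rewrite -sqrf_eq0 eq_le sqr_ge0 andbT; lra.
Qed.

Let plane_perp_trivial a c :
  b (a *: x + c *: y) p = 0 -> b (a *: x + c *: y) q = 0 -> a = 0 /\ c = 0.
Proof.
move=> up uq; have [+ _] := perp_neg_def up uq.
rewrite !(bDl, bZl, bDr, bZr) (bC y x) bxy bxx byy => norm_le0.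
by apply: sqr_sum_le0; lra.
Qed.

(* Sylvester's law of inertia in the form needed here: if the orthogonal
   complement of [p], [q] is negative definite, so is that of any positive
   plane [x], [y]. *)
Lemma positive_plane_perp_neg_def w :
  b w x = 0 -> b w y = 0 -> 0 <= b w w -> w = 0.
Proof.
move=> wx wy ww_ge0.
pose D := b x p * b y q - b x q * b y p.
have D_neq0 : D != 0.
  apply/eqP => D0.
  have [ypx0 /eqP] : b y p = 0 /\ - b x p = 0.
    apply: plane_perp_trivial; rewrite b_lin2; last rewrite -oppr0 -D0 /D; ring.
  rewrite oppr_eq0 => /eqP xpx0.
  have [yqy0 /eqP] : b y q = 0 /\ - b x q = 0.
    apply: plane_perp_trivial; rewrite b_lin2; first rewrite -D0 /D; ring.
  rewrite oppr_eq0 => /eqP xqx0.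
  have xp : b (1 *: x + 0 *: y) p = 0 by rewrite b_lin2 xpx0 ypx0; ring.
  have xq : b (1 *: x + 0 *: y) q = 0 by rewrite b_lin2 xqx0 yqy0; ring.
  by have [/eqP] := plane_perp_trivial xp xq; rewrite oner_eq0.
(* Cramer's rule: adding [al *: x + be *: y] moves [D *: w] into the
   orthogonal complement of [p] and [q]. *)
pose al := b w q * b y p - b w p * b y q.
pose be := b w p * b x q - b w q * b x p.
pose u := D *: w + (al *: x + be *: y).
have up : b u p = 0 by rewrite /u bDl bZl b_lin2 /D /al /be; ring.
have uq : b u q = 0 by rewrite /u bDl bZl b_lin2 /D /al /be; ring.
have [uu_le0 u0] := perp_neg_def up uq.
have uu : b u u = D ^+ 2 * b w w + (al ^+ 2 + be ^+ 2) * t by exact: norm_plane_perp.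
have D2_gt0 : 0 < D ^+ 2 by rewrite exprn_even_gt0 //= D_neq0.
have Dww_ge0 : 0 <= D ^+ 2 * b w w by rewrite mulr_ge0 // ltW.
have albe_ge0 : 0 <= (al ^+ 2 + be ^+ 2) * t by rewrite mulr_ge0 ?addr_ge0 ?sqr_ge0 // ltW.
have [al0 be0] : al = 0 /\ be = 0 by apply: sqr_sum_le0; lra.
have u_eq0 : u = 0 by apply: u0; lra.
move: u_eq0; rewrite /u al0 be0 !scale0r !addr0 => /eqP.
by rewrite scaler_eq0 (negbTE D_neq0) => /eqP.
Qed.

End PositivePlane.

Lemma bil_form (v w : 'rV[int]_20) : bil v w = form v w.
Proof. by rewrite -form_mxE (eq_map_mx _ intz) map_mx_id. Qed.

Lemma bil_Gamma (g : 'M[int]_20) (v w : 'rV[int]_20) :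
  in_Gamma g -> bil (v *m g) (w *m g) = bil v w.
Proof.
move=> [_ gG]; rewrite /bil trmx_mul -!mulmxA (mulmxA g) (mulmxA _ g^T) gG.
by rewrite !mulmxA.
Qed.

Lemma unigonal_orbit_root (v : 'rV[int]_20) :
  in_unigonal_orbit v -> form v v = -2 /\ forall w, (2 %| form v w)%Z.
Proof.
move=> [u [g [[_ [uu [_ [u_half _]]]] [g_Gamma ->]]]].
split=> [|w]; first by rewrite -bil_form bil_Gamma.
by rewrite -bil_form -(mulmxKV g_Gamma.1 w) bil_Gamma.
Qed.

(* Twice the minuscule fundamental weight of the E7 summand (Bourbaki
   numbering); together with the A1 root it represents the discriminant group
   (Z/2)^2 of Lambda_8 inside 2 Lambda_8^dual / 2 Lambda_8. *)
Definition e7_glue_coord (k : nat) : int :=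
  match k with 12 => 2 | 13 => 3 | 14 => 4 | 15 => 6 | 16 => 5 | 17 => 4 | 18 => 3 | _ => 0 end.

Definition e7_glue : 'rV[int]_20 := \row_(i < 20) e7_glue_coord i.

Definition a1_root : 'rV[int]_20 := unit_vec int 19.

Lemma coord_e7_glue k : (k < 20)%N -> coord e7_glue k = e7_glue_coord k.
Proof. by move=> lt_k20; rewrite /coord mxE inordK. Qed.

Lemma form_e7_glue (w : 'rV[int]_20) : form w e7_glue = -2 * coord w 18.
Proof. rewrite /form /half_form !coord_e7_glue //; cbn [e7_glue_coord]; ring. Qed.

Lemma form_a1_root (w : 'rV[int]_20) : form w a1_root = -2 * coord w 19.
Proof.
by rewrite /form /half_form !coord_unit_vec // !coord_unit_vec_neq //; ring.
Qed.

Local Ltac expand_form_unit_vec H :=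
  rewrite /form /half_form !coord_unit_vec // !coord_unit_vec_neq //
    !(mulr0, mulr1, addr0, add0r, subr0) in H.

(* U and E8 are unimodular, so [v] has even coordinates there; on E7 the
   parity conditions leave exactly the class of [e7_glue] modulo 2. *)
Lemma half_dual_decomposition (v : 'rV[int]_20) :
  (forall w, (2 %| form v w)%Z) ->
  exists y e d, v = 2 *: y + e *: e7_glue + d *: a1_root.
Proof.
move=> v_half.
have p0 := v_half (unit_vec int 0); expand_form_unit_vec p0.
have p1 := v_half (unit_vec int 1); expand_form_unit_vec p1.
have p2 := v_half (unit_vec int 2); expand_form_unit_vec p2.
have p3 := v_half (unit_vec int 3); expand_form_unit_vec p3.
have p4 := v_half (unit_vec int 4); expand_form_unit_vec p4.
have p5 := v_half (unit_vec int 5); expand_form_unit_vec p5.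
have p6 := v_half (unit_vec int 6); expand_form_unit_vec p6.
have p7 := v_half (unit_vec int 7); expand_form_unit_vec p7.
have p8 := v_half (unit_vec int 8); expand_form_unit_vec p8.
have p9 := v_half (unit_vec int 9); expand_form_unit_vec p9.
have p10 := v_half (unit_vec int 10); expand_form_unit_vec p10.
have p11 := v_half (unit_vec int 11); expand_form_unit_vec p11.
have p12 := v_half (unit_vec int 12); expand_form_unit_vec p12.
have p13 := v_half (unit_vec int 13); expand_form_unit_vec p13.
have p14 := v_half (unit_vec int 14); expand_form_unit_vec p14.
have p15 := v_half (unit_vec int 15); expand_form_unit_vec p15.
have p16 := v_half (unit_vec int 16); expand_form_unit_vec p16.
have p17 := v_half (unit_vec int 17); expand_form_unit_vec p17.
have p18 := v_half (unit_vec int 18); expand_form_unit_vec p18.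
have p19 := v_half (unit_vec int 19); expand_form_unit_vec p19.
pose r k := coord v k - coord v 13 * coord e7_glue k - coord v 19 * coord a1_root k.
have r_even k : (k < 20)%N -> (2 %| r k)%Z.
  move=> lt_k20; rewrite /r coord_e7_glue // /a1_root; move: lt_k20.
  do 4 (case: k => [_|k]; first by rewrite coord_unit_vec_neq //; cbn [e7_glue_coord];
    clear -p0 p1 p2 p3; lia).
  do 8 (case: k => [_|k]; first by rewrite coord_unit_vec_neq //; cbn [e7_glue_coord];
    clear -p4 p5 p6 p7 p8 p9 p10 p11; lia).
  do 7 (case: k => [_|k]; first by rewrite coord_unit_vec_neq //; cbn [e7_glue_coord];
    clear -p12 p13 p14 p15 p16 p17 p18; lia).
  by case: k => [_|//]; rewrite coord_unit_vec //; cbn [e7_glue_coord]; lia.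
pose y : 'rV[int]_20 := \row_(i < 20) (r i %/ 2)%Z.
exists y, (coord v 13), (coord v 19).
apply: row20P => k lt_k20; rewrite !coordD !coordZ [coord y k]mxE inordK //.
by rewrite [2 * _]mulrC divzK ?r_even // /r; ring.
Qed.

Lemma root_norm_parity (m e d : int) :
  8 * m - 6 * e ^+ 2 - 2 * d ^+ 2 = -2 -> (2 %| e)%Z /\ (2 %| d - 1)%Z.
Proof.
have [p [->|->]] : exists p, e = 2 * p \/ e = 2 * p + 1 by exists (e %/ 2)%Z; lia.
all: have [q [->|->]] : exists q, d = 2 * q \/ d = 2 * q + 1 by exists (d %/ 2)%Z; lia.
all: lia.
Qed.

(* The norm of [2 y + e e7_glue + d a1_root] is [-6 e^2 - 2 d^2] modulo 8,
   which is [-2] only for even [e] and odd [d]. *)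
Lemma half_dual_root_mod2 (v : 'rV[int]_20) :
  (forall w, (2 %| form v w)%Z) -> form v v = -2 -> exists y, v = a1_root + 2 *: y.
Proof.
move=> /half_dual_decomposition [y [e [d ->]]] vv.
have : 8 * (half_form y y - e * coord y 18 - d * coord y 19)
       - 6 * e ^+ 2 - 2 * d ^+ 2 = -2.
  rewrite -vv !(formDl, formDr, formZl, formZr) form_diag (formC e7_glue y).
  rewrite (formC a1_root y) (formC a1_root e7_glue) !form_e7_glue !form_a1_root.
  rewrite !coord_e7_glue // coord_unit_vec //; cbn [e7_glue_coord]; ring.
case/root_norm_parity => /dvdzP [e' ->] /dvdzP [d' d_odd].
exists (y + e' *: e7_glue + d' *: a1_root).
have -> : d = d' * 2 + 1 by lia.
by apply: row20P => k _; rewrite !(coordD, coordZ); ring.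
Qed.

Lemma half_dual_roots_not_orthogonal (v1 v2 : 'rV[int]_20) :
  (forall w, (2 %| form v1 w)%Z) -> (forall w, (2 %| form v2 w)%Z) ->
  form v1 v1 = -2 -> form v2 v2 = -2 -> form v1 v2 <> 0.
Proof.
move=> v1_half v2_half v1v1 v2v2 v1v2.
have [y1 def_v1] := half_dual_root_mod2 v1_half v1v1.
have [y2 def_v2] := half_dual_root_mod2 v2_half v2v2.
have diff : v1 - v2 = 2 *: (y1 - y2).
  by rewrite def_v1 def_v2 scalerBr opprD addrACA subrr add0r.
have norm_diff : form (v1 - v2) (v1 - v2) = -4.
  by rewrite !(formDl, formDr, formNl, formNr) (formC v2 v1) v1v1 v2v2 v1v2; lia.
by move: norm_diff; rewrite diff formZl formZr form_diag; lia.
Qed.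

Section PeriodDomain.
Variable R : realType.
Local Notation C := R[i].
Local Open Scope complex_scope.

Definition complexify (x y : 'rV[R]_20) : 'rV[C]_20 :=
  map_mx (real_complex R) x + 'i *: map_mx (real_complex R) y.

Lemma row_complexE (z : 'rV[C]_20) :
  z = complexify (map_mx (@complex.Re R) z) (map_mx (@complex.Im R) z).
Proof. by apply/rowP => j; rewrite !mxE [LHS]complexE. Qed.

Lemma conj_complexify x y : map_mx conjc (complexify x y) = complexify x (- y).
Proof. by apply/rowP => j; rewrite !mxE /=; simpc. Qed.

Lemma toC_real (w : 'rV[int]_20) : toC R w = map_mx (real_complex R) (map_mx intr w).
Proof. by apply/rowP => j; rewrite !mxE /intC rmorph_int. Qed.

Lemma complex_eq0 (a c : R) : a%:C + 'i * c%:C = 0 -> a = 0 /\ c = 0.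
Proof.
move=> ac0; have := congr1 (@complex.Re R) ac0; have := congr1 (@complex.Im R) ac0.
by simpc => /= -> ->.
Qed.

Lemma bilC_form (z w : 'rV[C]_20) : bilC z w = form z w.
Proof. exact: form_mxE. Qed.

Lemma form_complexify x y x' y' :
  form (complexify x y) (complexify x' y')
  = (form x x' - form y y')%:C + 'i * (form x y' + form y x')%:C.
Proof.
rewrite /complexify !(formDl, formDr, formZl, formZr) !form_map rmorphB rmorphD.
apply/eqP; rewrite -subr_eq0; apply/eqP.
transitivity (('i ^+ 2 + 1) * (form y y')%:C); first ring.
by rewrite sqr_i addNr mul0r.
Qed.

Lemma form_complexify_real x y w :
  form (complexify x y) (map_mx (real_complex R) w) = (form x w)%:C + 'i * (form y w)%:C.
Proof. by rewrite /complexify formDl formZl !form_map. Qed.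

Lemma in_D_complexify x y :
  in_D (complexify x y) <-> [/\ form x x = form y y, form x y = 0 & 0 < form x x].
Proof.
rewrite /in_D !bilC_form conj_complexify !form_complexify !formNr (formC y x).
rewrite opprK addNr mulr0 addr0 ltcR.
split=> [[/complex_eq0 [xx_yy xy0]] xx_yy_gt0 | [-> xy0 yy_gt0]].
- by split; lra.
- by rewrite subrr xy0 addr0 mulr0 addr0; split=> //; lra.
Qed.

Lemma bilC_complexify_perp x y (w : 'rV[int]_20) :
  bilC (complexify x y) (toC R w) = 0 <->
  form x (map_mx intr w) = 0 /\ form y (map_mx intr w) = 0.
Proof.
rewrite bilC_form toC_real form_complexify_real.
split=> [/complex_eq0 // | [-> ->]]; by rewrite mulr0 addr0.
Qed.

Lemma period_perp_neg (z : 'rV[C]_20) (w : 'rV[int]_20) :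
  in_D z -> bilC z (toC R w) = 0 -> w != 0 -> form w w < 0.
Proof.
rewrite [z]row_complexE in_D_complexify bilC_complexify_perp.
set x := map_mx _ z; set y := map_mx _ z.
move=> [xx_yy xy0 xx_gt0] [xw0 yw0] w_neq0.
rewrite ltNge; apply: contra w_neq0 => ww_ge0.
have wR0 : map_mx intr w = 0 :> 'rV[R]_20.
  apply: (positive_plane_perp_neg_def (@formC R) (@formDl R) (@formZl R)
    (@form_perp_pos_plane_neg_def R) xx_gt0 erefl (esym xx_yy) xy0).
  - by rewrite formC.
  - by rewrite formC.
  by rewrite form_map ler0z.
apply/eqP/rowP => j; move/rowP/(_ j): wR0.
by rewrite !mxE => /eqP; rewrite intr_eq0 => /eqP.
Qed.

End PeriodDomain.

Lemma toC_add_scale (R : realType) (v w : 'rV[int]_20) (s : int) :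
  toC R (v + s *: w) = toC R v + s%:~R *: toC R w.
Proof. by apply/rowP => j; rewrite !mxE /intC intrD intrM. Qed.

Lemma Hu2_empty (R : realType) : ~ exists z : 'rV[R[i]]_20, in_union_Hu2 z.
Proof.
move=> [z [v1 [v2 [v1_orbit [v2_orbit [indep [[z_D zv1] [_ zv2]]]]]]]].
have [v1v1 v1_half] := unigonal_orbit_root v1_orbit.
have [v2v2 v2_half] := unigonal_orbit_root v2_orbit.
have [m v1v2] : exists m, form v1 v2 = m * 2 by apply/dvdzP.
have neg s : s != 0 -> form (v1 + s *: v2) (v1 + s *: v2) < 0.
  move=> s_neq0; apply: (period_perp_neg z_D).
    by rewrite toC_add_scale bilC_form formDr formZr -!bilC_form zv1 zv2 mulr0 addr0.
  apply/eqP => sum0; move: (indep 1 s); rewrite scale1r => /(_ sum0) [/eqP].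
  by rewrite oner_eq0.
move: (neg 1 isT) (neg (-1) isT).
rewrite !(formDl, formDr, formZl, formZr) (formC v2 v1) v1v1 v2v2 v1v2 => norm_plus norm_minus.
have m0 : m = 0 by lia.
by apply: (half_dual_roots_not_orthogonal v1_half v2_half v1v1 v2v2); rewrite v1v2 m0.
Qed.

Lemma primitive_of_coords (v : 'rV[int]_20) i j :
  coord v i - coord v j = 1 -> primitive v.
Proof.
move=> vij; split.
  by apply/eqP => v0; move: vij; rewrite v0 /coord !mxE subrr.
move=> k w def_v; move: vij; rewrite def_v !coordZ -mulrBr => kw1.
have : k \is a GRing.unit by apply/unitrPr; exists (coord w i - coord w j).
by rewrite qualifE => /orP[] /eqP ->; [left | right].
Qed.

Lemma is_div2_of_coord (v : 'rV[int]_20) k :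
  (k < 20)%N -> (forall w, form w v = -2 * coord w k) -> is_div v 2.
Proof.
move=> lt_k20 vw; split=> //; split=> [w | ].
  by rewrite bil_form formC vw; apply/dvdzP; exists (- coord w k); ring.
by exists (-1 *: unit_vec int k); rewrite bil_form formC vw coordZ coord_unit_vec.
Qed.

Lemma e7_glue_hyperelliptic : hyperelliptic e7_glue.
Proof.
split; [|split].
- by apply: (@primitive_of_coords _ 13 12); rewrite !coord_e7_glue.
- by rewrite bil_form form_e7_glue coord_e7_glue.
- exact: (is_div2_of_coord (k := 18)) form_e7_glue.
Qed.

Lemma a1_root_unigonal : unigonal a1_root.
Proof.
split; [|split].
- by apply: (@primitive_of_coords _ 19 0); rewrite coord_unit_vec // coord_unit_vec_neq.
- by rewrite bil_form form_a1_root coord_unit_vec.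
- exact: (is_div2_of_coord (k := 19)) form_a1_root.
Qed.

Lemma sameF_refl (R : realType) (z : 'rV[R[i]]_20) : sameF z z.
Proof.
exists 1%:M; split; first by split; [exact: unitmx1 | rewrite mul1mx trmx1 mulmx1].
exists 1; split; first exact: oner_neq0.
have -> : map_mx (@intC R) (1%:M : 'M[int]_20) = 1%:M.
  by apply/matrixP => i j; rewrite !mxE /intC; case: (i == j).
by rewrite mulmx1 scale1r.
Qed.

Lemma Hh_meets_Hu (R : realType) : exists z z' : 'rV[R[i]]_20,
  in_union_hyperelliptic z /\ in_union_unigonal z' /\ sameF z z'.
Proof.
pose z := complexify (@pos_x R) pos_y.
have z_D : in_D z.
  rewrite in_D_complexify !form_pos_x !form_pos_y /pos_x /pos_y !coordD.
  by rewrite !coord_unit_vec // !coord_unit_vec_neq //; split; lra.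
have z_perp v : coord v 0 = 0 -> coord v 1 = 0 -> coord v 2 = 0 -> coord v 3 = 0 ->
    bilC z (toC R v) = 0.
  rewrite bilC_complexify_perp (formC pos_x) (formC pos_y) form_pos_x form_pos_y.
  by rewrite !coord_map => -> -> -> ->; rewrite mulr0z addr0.
exists z, z; split; [|split].
- exists e7_glue; split; first exact: e7_glue_hyperelliptic.
  by split=> //; apply: z_perp; rewrite coord_e7_glue.
- exists a1_root; split; first exact: a1_root_unigonal.
  by split=> //; apply: z_perp; rewrite coord_unit_vec_neq.
- exact: sameF_refl.
Qed.

Theorem mainTheorem13 (R : realType) :
  (exists z z' : 'rV[R[i]]_20,
      in_union_hyperelliptic z /\ in_union_unigonal z' /\ sameF z z')
  /\ ~ (exists z : 'rV[R[i]]_20, in_union_Hu2 z).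
Proof. by split; [exact: Hh_meets_Hu | exact: Hu2_empty]. Qed.
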